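(* If $G$ is a (finite, simple, connected) block graph, then $\mathrm{mob}(G)=\omega(G)$.
   Context: A block graph is a connected graph in which every block (maximal 2-connected subgraph or bridge) is a complete graph. $\omega(G)$ is the clique number. A set $S$ of vertices is a general position set if no three distinct vertices of $S$ lie on a common shortest path. Place one robot on each vertex of a general position set $S$; robots move one at a time, and a move is legal if a robot moves to an adjacent unoccupied vertex and the new set of occupied vertices is again a general position set. $S$ is a mobile general position set if some finite sequence of legal moves results in every vertex of $G$ being occupied by some robot at some moment. $\mathrm{mob}(G)$ is the maximum cardinality of a mobile general position set of $G$. *)

From mathcomp Require Import all_boot.
From mathcomp Require Import boolp.
Set Implicit Arguments. Unset Strict Implicit. Unset Printing Implicit Defensive.

Section Graphs.
Variable T : finType.
Variable e : rel T.

Definition simple_graph : Prop := symmetric e /\ irreflexive e.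

Definition connected_graph : Prop := forall x y : T, connect e x y.

Definition induced (B : {set T}) : rel T :=
  [rel x y | [&& e x y, x \in B & y \in B]].

Definition induced_connected (B : {set T}) : bool :=
  [forall x in B, forall y in B, connect (induced B) x y].

Definition biconn_or_bridge (B : {set T}) : bool :=
  [&& 1 < #|B|, induced_connected B &
      [forall v in B, induced_connected (B :\ v)]].

(* blocks: maximal such vertex sets (blocks are induced subgraphs) *)
Definition is_block (B : {set T}) : bool := maxset biconn_or_bridge B.

Definition is_clique (K : {set T}) : bool :=
  [forall x in K, forall y in K, (x != y) ==> e x y].

Definition block_graph : Prop :=
  simple_graph /\ connected_graph /\
  forall B : {set T}, is_block B -> is_clique B.

Definition clique_number : nat := \max_(K : {set T} | is_clique K) #|K|.

(* p (after the start vertex u) is a shortest u,v-path *)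
Definition shortest_path (u v : T) (p : seq T) : Prop :=
  [/\ path e u p, last u p = v &
      forall q : seq T, path e u q -> last u q = v -> size p <= size q].

Definition on_common_shortest_path (x y z : T) : Prop :=
  exists u v p, shortest_path u v p /\ x \in u :: p /\ y \in u :: p /\ z \in u :: p.

Definition gp_set (S : {set T}) : Prop :=
  forall x y z, x \in S -> y \in S -> z \in S ->
    x != y -> y != z -> x != z -> ~ on_common_shortest_path x y z.

Definition legal_move (S S' : {set T}) : Prop :=
  exists u v, [/\ u \in S, v \notin S, e u v,
                 S' = v |: (S :\ u) & gp_set S'].

Fixpoint legal_seq (S : {set T}) (l : seq {set T}) : Prop :=
  match l with
  | [::] => True
  | S' :: l' => legal_move S S' /\ legal_seq S' l'
  end.

Definition mobile_gp_set (S : {set T}) : Prop :=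
  gp_set S /\
  exists l : seq {set T}, legal_seq S l /\
    forall x : T, exists2 C, C \in S :: l & x \in C.

Definition mobile_gp_setb (S : {set T}) : bool := `[< mobile_gp_set S >].

Definition mob : nat := \max_(S : {set T} | mobile_gp_setb S) #|S|.

End Graphs.

From mathcomp Require Import all_boot zify.
From mathcomp Require boolp.
Set Implicit Arguments. Unset Strict Implicit. Unset Printing Implicit Defensive.

(* Write d for the graph distance. The gate of a vertex z in a maximal clique K
   is a vertex g of K nearest to z; in a block graph every other vertex of K is
   at distance d(z, g) + 1 from z. Hence a maximum clique K is a mobile general
   position set: to visit w, the robot on the gate a of w walks along a geodesic
   to w and back, and along the way it stays one step closer to a than to every
   other vertex of K, so no three robots ever lie on a common geodesic.
   Conversely, let S be a mobile general position set with |S| > 2. A vertex m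
   outside S that separates two robots even after any single robot is ignored
   can never be reached, so no such m exists. Pick a maximal clique K minimising
   the total distance from the robots to their gates. If |S| > |K|, two robots
   share a gate a; passing to a maximal clique through a and the neighbour of a
   towards one of them then strictly lowers that total, because a is a cut
   vertex and by the previous remark it cuts off at most one robot from the
   others. Hence |S| <= omega(G). *)

(** * Distances and geodesics *)

Section Graph.
Variables (T : finType) (e : rel T).
Hypotheses (sym_e : symmetric e) (irr_e : irreflexive e) (conn_e : connected_graph e).

Definition has_walk n x y := [exists p : n.-tuple T, path e x p && (last x p == y)].

Lemma has_walkP n x y :
  reflect (exists p, [/\ path e x p, last x p = y & size p = n]) (has_walk n x y).
Proof.
apply: (iffP existsP) => [[p /andP[Hp /eqP Hl]]|[p [Hp Hl Hs]]].
  by exists p; rewrite size_tuple.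
have Hs' : size p == n by rewrite Hs.
by exists (Tuple Hs'); rewrite /= Hp Hl eqxx.
Qed.

Lemma exists_walk x y : exists n, has_walk n x y.
Proof.
have /connectP[p Hp Hl] := conn_e x y.
by exists (size p); apply/has_walkP; exists p.
Qed.

Definition dist x y := ex_minn (exists_walk x y).

Lemma dist_walk x y : exists p, [/\ path e x p, last x p = y & size p = dist x y].
Proof. by rewrite /dist; case: ex_minnP => n /has_walkP. Qed.

Lemma dist_le_size x p : path e x p -> dist x (last x p) <= size p.
Proof.
move=> Hp; rewrite /dist; case: ex_minnP => n _; apply.
by apply/has_walkP; exists p.
Qed.

Lemma dist_eq0 x y : (dist x y == 0) = (x == y).
Proof.
apply/eqP/eqP => [|->].
  by case: (dist_walk x y) => [[|z p] [_ <- /= <-]].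
by apply/eqP; rewrite -leqn0 (dist_le_size (x := y) (p := [::])).
Qed.

Lemma distxx x : dist x x = 0.
Proof. by apply/eqP; rewrite dist_eq0. Qed.

Lemma dist_gt0 x y : (0 < dist x y) = (x != y).
Proof. by rewrite lt0n dist_eq0. Qed.

Lemma distC x y : dist x y = dist y x.
Proof.
suff le_dist u v : dist u v <= dist v u by apply/eqP; rewrite eqn_leq !le_dist.
case: (dist_walk v u) => p [Hp <- <-].
have Hq : path e (last v p) (rev (belast v p)).
  by rewrite rev_path; apply: sub_path Hp => a b; rewrite sym_e.
have := dist_le_size Hq; rewrite size_rev size_belast.
by case: p {Hp Hq} => [|z p] //=; rewrite rev_cons last_rcons.
Qed.

Lemma dist_triangle x y z : dist x z <= dist x y + dist y z.
Proof.
case: (dist_walk x y) => p [Hp Hl <-]; case: (dist_walk y z) => q [Hq <- <-].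
have Hpq : path e x (p ++ q) by rewrite cat_path Hp Hl Hq.
by have := dist_le_size Hpq; rewrite last_cat Hl size_cat.
Qed.

Lemma edge_sym x y : e x y -> e y x.
Proof. by rewrite sym_e. Qed.

Lemma edge_neq x y : e x y -> x != y.
Proof. by apply: contraTneq => ->; rewrite irr_e. Qed.

Lemma dist_edge x y : e x y -> dist x y = 1.
Proof.
move=> Hxy; apply/eqP; rewrite eqn_leq dist_gt0 edge_neq // andbT.
by have := dist_le_size (x := x) (p := [:: y]); rewrite /= Hxy; apply.
Qed.

Lemma dist_edge_ler x y z : e y z -> dist x z <= (dist x y).+1.
Proof. by move=> Hyz; rewrite -addn1 -(dist_edge Hyz) dist_triangle. Qed.

Lemma dist_edge_lel x y z : e y z -> dist z x <= (dist y x).+1.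
Proof. by move=> Hyz; rewrite !(distC _ x) dist_edge_ler. Qed.

Lemma exists_closer_neighbor x w : x != w ->
  exists y, e x y /\ dist x w = (dist y w).+1.
Proof.
move=> Hxw; case: (dist_walk x w) => [[|y p] [/= Hp Hl Hs]].
  by rewrite -Hl eqxx in Hxw.
move: Hp => /andP[Hxy Hp]; exists y; split => //.
have := dist_le_size Hp; have := dist_triangle x y w.
by rewrite (dist_edge Hxy) Hl -Hs /=; lia.
Qed.

Definition geodesic x p := path e x p && (size p == dist x (last x p)).

Lemma geodesicP x p :
  reflect (path e x p /\ size p = dist x (last x p)) (geodesic x p).
Proof. by apply: (iffP andP) => -[Hp /eqP Hs]. Qed.

Lemma geodesic_path x p : geodesic x p -> path e x p.
Proof. by case/andP. Qed.

Lemma geodesic_size x p : geodesic x p -> size p = dist x (last x p).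
Proof. by case/geodesicP. Qed.

Lemma exists_geodesic x y : exists2 p, geodesic x p & last x p = y.
Proof.
case: (dist_walk x y) => p [Hp Hl Hs]; exists p => //.
by apply/geodesicP; rewrite Hl.
Qed.

Lemma geodesic_cat x p1 p2 :
  geodesic x (p1 ++ p2) -> geodesic x p1 /\ geodesic (last x p1) p2.
Proof.
case/geodesicP; rewrite cat_path last_cat size_cat => /andP[H1 H2] Hs.
have := dist_le_size H1; have := dist_le_size H2.
have := dist_triangle x (last x p1) (last (last x p1) p2).
by split; apply/geodesicP; split => //; lia.
Qed.

Lemma geodesic_between x p u : geodesic x p -> u \in x :: p ->
  dist x u + dist u (last x p) = dist x (last x p).
Proof.
move=> + Hu; case/splitPl: Hu => p1 p2 Hl Hg.
have [/geodesic_size S1 /geodesic_size S2] := geodesic_cat Hg.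
move: (geodesic_size Hg); rewrite last_cat size_cat S1 S2 Hl; lia.
Qed.

Lemma geodesic_between2 x p u v : geodesic x p -> u \in x :: p -> v \in x :: p ->
  dist x u + dist u v = dist x v \/ dist x v + dist v u = dist x u.
Proof.
move=> Hg Hu; have Bu := geodesic_between Hg Hu.
case/splitPl: Hu Hg Bu => p1 p2 Hl Hg Bu Hv.
have Bv := geodesic_between Hg Hv; have [G1] := geodesic_cat Hg; rewrite Hl => G2.
move: Hv Bu Bv; rewrite -cat_cons mem_cat last_cat Hl => /orP[Hv|Hv] Bu Bv.
  by right; have := geodesic_between G1 Hv; rewrite Hl.
have Hv' : v \in u :: p2 by rewrite inE Hv orbT.
by left; have := geodesic_between G2 Hv'; lia.
Qed.

Lemma shortest_pathE u v p : shortest_path e u v p <-> geodesic u p /\ last u p = v.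
Proof.
split=> [[Hp Hl Hmin]|[Hg Hl]].
  split=> //; apply/geodesicP; split=> //.
  case: (dist_walk u v) => q [Hq Hlq Hsq].
  by have := Hmin q Hq Hlq; have := dist_le_size Hp; rewrite Hl; lia.
split=> [||q Hq Hlq]; first exact: geodesic_path.
  by [].
by rewrite (geodesic_size Hg) Hl -Hlq dist_le_size.
Qed.

Definition between x y z := dist x y + dist y z == dist x z.

Lemma common_shortest_path_between x y z : on_common_shortest_path e x y z ->
  [|| between x y z, between y x z | between x z y].
Proof.
case=> u [v [p [/shortest_pathE[Hg _] [Hx [Hy Hz]]]]].
have := geodesic_between2 Hg Hx Hy; have := geodesic_between2 Hg Hx Hz.
have := geodesic_between2 Hg Hy Hz.
have := distC x y; have := distC x z; have := distC y z.
rewrite /between => Cyz Cxz Cxy Byz Bxz Bxy.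
have : dist x y + dist y z = dist x z \/ dist y x + dist x z = dist y z \/
       dist x z + dist z y = dist x y by lia.
by case=> [->|[->|->]]; rewrite eqxx ?orbT.
Qed.

Lemma gp_set_between (S : {set T}) :
  {in S & &, forall x y z, x != y -> y != z -> x != z -> ~~ between x y z} ->
  gp_set e S.
Proof.
move=> H x y z Hx Hy Hz Hxy Hyz Hxz /common_shortest_path_between.
case/or3P => Hb.
- by move: (H x y z Hx Hy Hz Hxy Hyz Hxz); rewrite Hb.
- by move: (H y x z Hy Hx Hz); rewrite eq_sym Hxy Hxz Hyz Hb => /(_ isT isT isT).
- by move: (H x z y Hx Hz Hy); rewrite (eq_sym z) Hyz Hxy Hxz Hb => /(_ isT isT isT).
Qed.

(** * Separation and cliques *)

Definition separates m x y := ~~ connect (induced e [set~ m]) x y.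

Lemma induced_sym (A : {set T}) : symmetric (induced e A).
Proof. by move=> x y; rewrite /induced /= sym_e (andbC (x \in A)). Qed.

Lemma induced_connect_sym (A : {set T}) x y :
  connect (induced e A) x y = connect (induced e A) y x.
Proof. exact/sym_connect_sym/induced_sym. Qed.

Lemma separatesC m x y : separates m x y = separates m y x.
Proof. by rewrite /separates induced_connect_sym. Qed.

Lemma path_induced (A : {set T}) x p :
  x \in A -> all (mem A) p -> path e x p -> path (induced e A) x p.
Proof.
elim: p x => [|y p IH] x //= Hx /andP[Hy Hall] /andP[Hxy Hp].
by rewrite /induced /= Hxy Hx Hy IH.
Qed.

Lemma path_induced_connect (A : {set T}) x p : path (induced e A) x p ->
  {in x :: p &, forall y z, connect (induced e A) y z}.
Proof.
move=> Hp; suff from_x y : y \in x :: p -> connect (induced e A) x y.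
  move=> y z /from_x Hy /from_x Hz.
  by apply: connect_trans Hz; rewrite induced_connect_sym.
move=> Hy; case/splitPl: Hy Hp => p1 p2 Hl; rewrite cat_path => /andP[Hp1 _].
by apply/connectP; exists p1.
Qed.

Lemma separates_common_shortest_path m x y : x != m -> y != m ->
  separates m x y -> on_common_shortest_path e x m y.
Proof.
move=> Hxm Hym Hsep; case: (exists_geodesic x y) => p Hg Hl.
have Hm : m \in p.
  apply: contraNT Hsep => Hmp; rewrite -Hl.
  apply/connectP; exists p => //; apply: path_induced (geodesic_path Hg).
    by rewrite in_setC1.
  by apply/allP => z Hz; rewrite /= in_setC1; apply: contraNneq Hmp => <-.
exists x, y, p; split; first exact/shortest_pathE.
by rewrite mem_head -Hl mem_last inE Hm orbT.
Qed.

Lemma is_cliqueP (K : {set T}) :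
  reflect {in K &, forall x y, x != y -> e x y} (is_clique e K).
Proof.
apply: (iffP forall_inP) => [H x y Hx Hy|H x Hx].
  by move/forall_inP/(_ y Hy): (H x Hx) => /implyP.
by apply/forall_inP => y Hy; apply/implyP; apply: H.
Qed.

Lemma is_clique_subset (A B : {set T}) :
  A \subset B -> is_clique e B -> is_clique e A.
Proof.
move=> /subsetP sAB /is_cliqueP HB; apply/is_cliqueP => x y Hx Hy.
exact: HB (sAB x Hx) (sAB y Hy).
Qed.

Lemma is_clique1 x : is_clique e [set x].
Proof. by apply/is_cliqueP => u v /set1P-> /set1P->; rewrite eqxx. Qed.

Lemma is_clique2 x y : e x y -> is_clique e [set x; y].
Proof.
move=> Hxy; apply/is_cliqueP => u v.
by rewrite !inE => /orP[]/eqP-> /orP[]/eqP->; rewrite ?eqxx // sym_e.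
Qed.

(** * Cycles and distances in block graphs *)

Section BlockGraph.
Hypothesis hblock : forall B : {set T}, is_block e B -> is_clique e B.

Lemma biconn_or_bridge_clique (B : {set T}) : biconn_or_bridge e B -> is_clique e B.
Proof.
by case/maxset_exists => A /hblock HA sBA; apply: is_clique_subset sBA HA.
Qed.

Lemma path_induced_connected x p : path e x p -> induced_connected e [set y in x :: p].
Proof.
move=> Hp; have HA : x \in [set y in x :: p] by rewrite inE mem_head.
have /path_induced_connect Hc : path (induced e [set y in x :: p]) x p.
  by apply: path_induced Hp => //; apply/allP => z Hz; rewrite /= inE inE Hz orbT.
by apply/forall_inP => y Hy; apply/forall_inP => z Hz; apply: Hc; rewrite -[_ \in _ :: _]in_set.
Qed.

Lemma cycle_clique c : uniq c -> 2 < size c -> cycle e c -> is_clique e [set x in c].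
Proof.
move=> Hu Hs Hc; apply/biconn_or_bridge_clique/and3P; split.
- by rewrite cardsE (card_uniqP Hu) ltnW.
- case: c Hu Hs Hc => [|x p] // _ _; rewrite /= rcons_path => /andP[Hp _].
  exact: path_induced_connected.
apply/forall_inP => v; rewrite inE => /rot_to[i [|y p] Hrot].
  by move: Hs; rewrite -(size_rot i) Hrot.
have /andP[Hv _] : uniq (v :: y :: p) by rewrite -Hrot rot_uniq.
have -> : [set x in c] :\ v = [set x in y :: p].
  apply/setP => u; rewrite !inE -(mem_rot i c) Hrot inE.
  by case: eqVneq => [->|] //=; move: Hv; rewrite inE => /negbTE.
have : cycle e (v :: y :: p) by rewrite -Hrot rot_cycle.
rewrite /= rcons_path => /and3P[_ Hp _]; exact: path_induced_connected Hp.
Qed.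

Lemma cycle_adj c x y : uniq c -> 2 < size c -> cycle e c ->
  x \in c -> y \in c -> x != y -> e x y.
Proof.
move=> Hu Hs Hc Hx Hy; apply: (is_cliqueP _ (cycle_clique Hu Hs Hc)); by rewrite inE.
Qed.

Lemma cycle4_chord a b c d : e a b -> e b c -> e c d -> e d a ->
  a != c -> b != d -> e a c.
Proof.
move=> Hab Hbc Hcd Hda Hac Hbd.
apply: (@cycle_adj [:: a; b; c; d]); rewrite ?inE ?eqxx ?orbT //=.
  rewrite !inE !negb_or (edge_neq Hab) (edge_neq Hbc) (edge_neq Hcd) Hac Hbd.
  by rewrite eq_sym (edge_neq Hda).
by rewrite Hab Hbc Hcd Hda.
Qed.

Lemma path_common_closer_neighbor w n y r :
  uniq (y :: r) -> path e y r -> y != last y r ->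
  dist y w = n -> dist (last y r) w = n -> {in y :: r, forall u, n <= dist u w} ->
  exists2 s, dist s w < n & {in y :: r, forall u, e s u}.
Proof.
(* Push both ends one step towards [w]; once the two new ends coincide, the
   closed cycle is a clique. *)
elim: n y r => [|n IH] y r Hu Hp Hne Hy Hx Hall.
  move/eqP: Hx; move/eqP: Hy; rewrite !dist_eq0 => /eqP Ey /eqP Ex.
  by rewrite Ex Ey eqxx in Hne.
set x := last y r in Hx Hne.
have [x' [Hxx' [Dx']]] : exists x', e x x' /\ n.+1 = (dist x' w).+1.
  by rewrite -Hx; apply: exists_closer_neighbor; rewrite -dist_gt0 Hx.
have [y' [Hyy' [Dy']]] : exists y', e y y' /\ n.+1 = (dist y' w).+1.
  by rewrite -Hy; apply: exists_closer_neighbor; rewrite -dist_gt0 Hy.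
have Hx'n : x' \notin y :: r by apply/negP => /Hall; rewrite -Dx' ltnn.
have Hy'n : y' \notin y :: r by apply/negP => /Hall; rewrite -Dy' ltnn.
case: (eqVneq x' y') => [Exy'|Nxy'].
  exists x'; first by rewrite -Dx'.
  have Hr : r != [::] by apply: contraNneq Hne => Er; rewrite /x Er.
  move=> u Hu'; apply: (@cycle_adj (x' :: y :: r)).
  - by rewrite cons_uniq Hx'n Hu.
  - by rewrite /= !ltnS lt0n size_eq0.
  - by rewrite /= rcons_path Hp -/x Exy' sym_e Hyy' -Exy'.
  - exact: mem_head.
  - by rewrite inE Hu' orbT.
  - by apply: contraNneq Hx'n => ->.
case: (IH y' (rcons (y :: r) x')).
- by rewrite cons_uniq rcons_uniq mem_rcons inE negb_or eq_sym Nxy' Hx'n Hy'n Hu.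
- by rewrite /= rcons_path Hp -/x Hxx' sym_e Hyy'.
- by rewrite last_rcons eq_sym.
- by rewrite Dy'.
- by rewrite last_rcons Dx'.
- move=> u; rewrite inE mem_rcons inE => /or3P[/eqP->|/eqP->|/Hall].
  + by rewrite Dy'.
  + by rewrite Dx'.
  + exact: ltnW.
move=> s Hs Hadj; exists s; first exact: ltnW.
by move=> u Hu'; apply: Hadj; rewrite inE mem_rcons inE Hu' !orbT.
Qed.

Lemma common_closer_neighbor w x y : e x y -> dist x w = dist y w ->
  exists s, [/\ e s x, e s y & (dist s w).+1 = dist x w].
Proof.
move=> Hxy Hd.
case: (@path_common_closer_neighbor w (dist x w) y [:: x]).
- by rewrite /= inE andbT eq_sym edge_neq.
- by rewrite /= sym_e Hxy.
- by rewrite /= eq_sym edge_neq.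
- by [].
- by [].
- by move=> u; rewrite !inE => /orP[]/eqP->; rewrite ?Hd.
move=> s Hs Hadj; have Hsx : e s x by apply: Hadj; rewrite !inE eqxx orbT.
exists s; split => //; first by apply: Hadj; rewrite mem_head.
by apply/eqP; rewrite eqn_leq Hs dist_edge_lel.
Qed.

Lemma path_crossing_adj a c n y r : e a c -> uniq (y :: r) -> path e y r ->
  dist (last y r) a = n -> dist (last y r) c = n.+1 ->
  dist y c = n -> dist y a = n.+1 ->
  {in y :: r, forall u, n <= dist u a /\ n <= dist u c} ->
  {in y :: r, forall u, u != c -> e u c}.
Proof.
(* Push the ends towards [a] and [c] respectively until they reach them; the
   path then closes into a cycle through the edge [a c]. *)
move=> Hac; elim: n y r => [|n IH] y r Hu Hp Hxa Hxc Hyc Hya Hall u Hu' Huc.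
  move/eqP: Hxa; move/eqP: Hyc; rewrite !dist_eq0 => /eqP Ey /eqP Ex.
  case: r {Hall} Hu Hp Ex Hxc Hu' => [|z [|z' r]] Hu Hp /= Ex Hxc Hu'.
  - by rewrite Ey distxx in Hxc.
  - by move: Hu'; rewrite !inE Ey (negbTE Huc) /= => /eqP->; rewrite Ex.
  apply: (@cycle_adj [:: y, z, z' & r]) => //; last by rewrite Ey mem_head.
  move: Hp => /= /and3P[-> -> Hp].
  by rewrite rcons_path Hp /= Ex Ey.
set x := last y r in Hxa Hxc.
have [x' [Hxx' [Dx']]] : exists x', e x x' /\ n.+1 = (dist x' a).+1.
  by rewrite -Hxa; apply: exists_closer_neighbor; rewrite -dist_gt0 Hxa.
have [y' [Hyy' [Dy']]] : exists y', e y y' /\ n.+1 = (dist y' c).+1.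
  by rewrite -Hyc; apply: exists_closer_neighbor; rewrite -dist_gt0 Hyc.
have Dx'c : dist x' c = n.+1.
  have := dist_edge_ler x' Hac; have := dist_edge_lel c (edge_sym Hxx').
  by rewrite Hxc; lia.
have Dy'a : dist y' a = n.+1.
  have := dist_edge_ler y' (edge_sym Hac); have := dist_edge_lel a (edge_sym Hyy').
  by rewrite Hya; lia.
have Hx'n : x' \notin y :: r by apply/negP => /Hall[]; rewrite -Dx' ltnn.
have Hy'n : y' \notin y :: r by apply/negP => /Hall[_]; rewrite -Dy' ltnn.
have Nxy' : x' != y' by apply/eqP => Exy; move: Dx'; rewrite Exy Dy'a; apply: n_Sn.
apply: (IH y' (rcons (y :: r) x')) => //.
- by rewrite cons_uniq rcons_uniq mem_rcons inE negb_or eq_sym Nxy' Hx'n Hy'n Hu.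
- by rewrite /= rcons_path Hp -/x Hxx' sym_e Hyy'.
- by rewrite last_rcons.
- by rewrite last_rcons.
- move=> v; rewrite inE mem_rcons inE => /or3P[/eqP->|/eqP->|/Hall[? ?]].
  + by rewrite Dy'a -Dy'.
  + by rewrite Dx'c -Dx'.
  + by split; apply: ltnW.
- by rewrite inE mem_rcons inE Hu' !orbT.
Qed.

Lemma crossed_edges a c v w m : e a c -> e v w ->
  dist v a = m -> dist w c = m -> dist v c = m.+1 -> dist w a = m.+1 -> m = 0.
Proof.
move=> Hac Hvw Hva Hwc Hvc Hwa.
have Hvc' : v != c by rewrite -dist_gt0 Hvc.
suff /dist_edge : e v c by rewrite Hvc => -[].
apply: (@path_crossing_adj a c m w [:: v]) => //.
- by rewrite /= inE andbT eq_sym edge_neq.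
- by rewrite /= edge_sym.
- by move=> u; rewrite !inE => /orP[]/eqP->; lia.
- by rewrite !inE eqxx orbT.
Qed.

Lemma triangle_equidistant a b s v : e a b -> e a s -> e b s ->
  dist v a = dist v s -> dist v b <= dist v a.
Proof.
move=> Hab Has Hbs Hd.
have [t [Hta Hts Dt]] : exists t, [/\ e t a, e t s & (dist t v).+1 = dist a v].
  by apply: common_closer_neighbor; rewrite // !(distC _ v).
have Dvt : (dist v t).+1 = dist v a by rewrite !(distC v).
case: (eqVneq t b) => [<-|Ntb]; first by rewrite -Dvt.
have Htb : e t b.
  apply: (@cycle4_chord t a b s) => //; first exact: edge_sym.
  exact: edge_neq.
by rewrite -Dvt dist_edge_ler.
Qed.

Definition closer a b u := dist u b == (dist u a).+1.

Lemma closer_edge a b v w : e a b -> closer a b v -> v != a -> e v w ->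
  closer a b w.
Proof.
move=> Hab /eqP Hvb Hva Hvw; set m := dist v a in Hvb.
have m_gt0 : 0 < m by rewrite dist_gt0.
have Lwa := dist_edge_lel a Hvw; have Lva := dist_edge_lel a (edge_sym Hvw).
have Lwb := dist_edge_lel b Hvw; have Lvb := dist_edge_lel b (edge_sym Hvw).
have Lab := dist_edge_ler w Hab; have Lba := dist_edge_ler w (edge_sym Hab).
rewrite -/m Hvb in Lwa Lva Lwb Lvb.
(* Otherwise either the edges [a b] and [v w] cross, or [w] is equidistant from
   [a] and [b] and a common neighbour [s] of [a] and [b] closer to [w] yields a
   crossing or an equidistant triangle. *)
have : dist w b = (dist w a).+1 \/ (dist w a = m.+1 /\ dist w b = m) \/
       (dist w a = dist w b /\ (dist w a = m \/ dist w a = m.+1)) by lia.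
case=> [/eqP //|[[Ea Eb]|[Eab Ea]]].
  by have := crossed_edges Hab Hvw (erefl m) Eb Hvb Ea; lia.
have [s [Hsa Hsb Ds]] : exists s, [/\ e s a, e s b & (dist s w).+1 = dist a w].
  by apply: common_closer_neighbor; rewrite // !(distC _ w).
have Lsa := dist_edge_ler v (edge_sym Hsa); have Lbs := dist_edge_ler v Hsb.
have Lws := dist_triangle v w s.
rewrite -/m Hvb (dist_edge Hvw) in Lsa Lbs Lws.
rewrite (distC a w) (distC s w) in Ds.
have [Dvs|Dvs] : dist v s = m \/ dist v s = m.+1 by lia.
  have := triangle_equidistant Hab (edge_sym Hsa) (edge_sym Hsb) (esym Dvs).
  by rewrite Hvb -/m ltnn.
have Dws : dist w s = m by lia.
have Dwa : dist w a = m.+1 by lia.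
by have := crossed_edges (edge_sym Hsa) Hvw (erefl m) Dws Dvs Dwa; lia.
Qed.

Lemma closer_separates a b v u : e a b -> closer a b v -> v != a -> ~~ closer a b u ->
  separates a v u.
Proof.
move=> Hab Hv Hva Hu; apply/negP => /connectP[p Hp Eu]; move: Hu; rewrite Eu.
elim: p v Hv Hva Hp {Eu} => [|z p IH] v Hv Hva /=; first by rewrite Hv.
rewrite {1}/induced /= !in_setC1 => /andP[/and3P[Hvz _ Hza] Hp].
exact: IH (closer_edge Hab Hv Hva Hvz) Hza Hp.
Qed.

(** * Gates of maximal cliques *)

Definition maxclique (K : {set T}) := maxset (is_clique e) K.

(* The junk value [z] is taken only when [K] is empty. *)
Definition gate (K : {set T}) z :=
  if [pick b in K] is Some b0 then [arg min_(b < b0 in K) dist z b] else z.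

Lemma gateP (K : {set T}) z b : b \in K ->
  gate K z \in K /\ {in K, forall c, dist z (gate K z) <= dist z c}.
Proof.
move=> Hb; rewrite /gate; case: pickP => [b0 Hb0|/(_ b)]; last by rewrite Hb.
by case: arg_minnP.
Qed.

Lemma is_clique_setU1 (K : {set T}) s :
  is_clique e K -> {in K, forall c, c != s -> e s c} -> is_clique e (s |: K).
Proof.
move=> /is_cliqueP HK Hs; apply/is_cliqueP => x y.
rewrite !inE => /orP[/eqP->|Hx] /orP[/eqP->|Hy] Hxy.
- by rewrite eqxx in Hxy.
- by apply: Hs; rewrite // eq_sym.
- exact/edge_sym/Hs.
- exact: HK.
Qed.

Lemma gate_dist_succ (K : {set T}) z b : maxclique K -> b \in K -> b != gate K z ->
  dist z b = (dist z (gate K z)).+1.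
Proof.
move=> /maxsetP[HK Hmax] Hb Hbg; have [Hg Hmin] := gateP z Hb.
set g := gate K z in Hbg Hg Hmin *.
have Hgb : e g b by apply: (is_cliqueP _ HK) => //; rewrite eq_sym.
have Lb := Hmin b Hb; have Ub := dist_edge_ler z Hgb.
have [Eb|//] : dist z b = dist z g \/ dist z b = (dist z g).+1 by lia.
have [s [Hsg Hsb Ds]] : exists s, [/\ e s g, e s b & (dist s z).+1 = dist g z].
  by apply: common_closer_neighbor; rewrite // !(distC _ z).
have HsK : s \notin K.
  by apply/negP => /Hmin; rewrite (distC z s) (distC z g) -Ds ltnn.
suff /Hmax/(_ (subsetUr _ _))/setP/(_ s) : is_clique e (s |: K).
  by rewrite !inE eqxx (negbTE HsK).
apply: is_clique_setU1 => // c Hc _.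
case: (eqVneq c g) => [->|Ncg] //; case: (eqVneq c b) => [->|Ncb] //.
apply: (@cycle4_chord s g c b) => //.
- by apply: (is_cliqueP _ HK); rewrite // eq_sym.
- exact: (is_cliqueP _ HK).
- exact: edge_sym.
- by apply: contraNneq HsK => ->.
- by rewrite eq_sym.
Qed.

Lemma gate_separates (K : {set T}) a r r2 : maxclique K -> a \in K ->
  gate K r != a -> gate K r2 = a -> r2 != a -> separates a r2 r.
Proof.
move=> HK Ha Hr Hr2 Hr2a; have [Hb _] := gateP r Ha; set b := gate K r in Hr Hb.
have Hab : e a b by apply: (is_cliqueP _ (maxsetp HK)); rewrite // eq_sym.
apply: (closer_separates Hab) => //.
  by apply/eqP; rewrite -Hr2 (@gate_dist_succ K) // Hr2.
rewrite /closer (@gate_dist_succ K r a) // 1?eq_sym // -/b.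
by rewrite eqn_leq ltnNge leqnSn.
Qed.

(** * Mobility of maximal cliques *)

Section Relocation.
Variables (K : {set T}) (a : T).

Definition gated u := [forall b in K :\ a, closer a b u].

Definition relocate u := u |: (K :\ a).

Lemma gatedP u : gated u -> {in K :\ a, forall b, dist u b = (dist u a).+1}.
Proof. by move=> /forall_inP H b /H/eqP. Qed.

Lemma gated_notin u : gated u -> u \notin K :\ a.
Proof. by move=> G; apply/negP => Hu; have := gatedP G Hu; rewrite distxx. Qed.

Lemma gated_legal_move u v : gated u -> gated v -> e u v ->
  gp_set e (relocate v) -> legal_move e (relocate u) (relocate v).
Proof.
move=> Gu Gv Huv Hgp; exists u, v; split => //.
- exact: setU11.
- by rewrite !inE negb_or eq_sym edge_neq //= -in_setD1 gated_notin.
- by rewrite /relocate setU1K // gated_notin.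
Qed.

Hypotheses (HK : is_clique e K) (Ha : a \in K).

Lemma relocate_self : relocate a = K.
Proof. exact: setD1K. Qed.

Lemma gated_gp u : gated u -> gp_set e (relocate u).
Proof.
move=> G; have dU := gatedP G.
have dK p q : p \in K :\ a -> q \in K :\ a -> p != q -> dist p q = 1.
  by move=> /setD1P[_ Hp] /setD1P[_ Hq] Hpq; apply/dist_edge/(is_cliqueP _ HK).
apply: gp_set_between => x y z; rewrite /between.
case/setU1P => [->|Hx]; case/setU1P => [->|Hy]; case/setU1P => [->|Hz];
  rewrite ?eqxx // => Hxy Hyz Hxz.
- by rewrite (dU y Hy) (dU z Hz) (dK y z) //; apply/eqP; lia.
- by rewrite (distC x u) (dU x Hx) (dU z Hz) (dK x z) //; apply/eqP; lia.
- by rewrite (distC y u) (distC x u) (dU x Hx) (dU y Hy) (dK x y) //; apply/eqP; lia.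
- by rewrite (dK x y) // (dK y z) // (dK x z).
Qed.

Lemma gated_walk v q : gated v -> path e v q -> all gated q ->
  legal_seq e (relocate v) (map relocate q) /\
  last (relocate v) (map relocate q) = relocate (last v q).
Proof.
elim: q v => [|w q IH] v Gv //= /andP[Hvw Hp] /andP[Gw Hall].
have [Hseq Hlast] := IH w Gw Hp Hall.
by do !split => //; apply: gated_legal_move => //; apply: gated_gp.
Qed.

End Relocation.

Lemma gated_geodesic (K : {set T}) w p : maxclique K -> K != set0 ->
  geodesic (gate K w) p -> last (gate K w) p = w ->
  all (gated K (gate K w)) (gate K w :: p).
Proof.
move=> HK /set0Pn[k Hk] Hg Hl; have [Ha _] := gateP w Hk; set a := gate K w in Ha Hg Hl *.
apply/allP => u Hu; apply/forall_inP => b /setD1P[Hba Hb]; apply/eqP.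
have Gb : dist w b = (dist w a).+1 := gate_dist_succ HK Hb Hba.
have Bt := geodesic_between Hg Hu; rewrite Hl in Bt.
have Hab : e a b by apply: (is_cliqueP _ (maxsetp HK)); rewrite // eq_sym.
have L1 := dist_edge_ler u Hab; have L2 := dist_triangle w u b.
have := distC a u; have := distC u w; have := distC a w; lia.
Qed.

Lemma legal_seq_cat S l1 l2 :
  legal_seq e S (l1 ++ l2) <-> legal_seq e S l1 /\ legal_seq e (last S l1) l2.
Proof.
elim: l1 S => [|S1 l1 IH] S /=; first by split => [|[]].
by rewrite IH; split => [[? []]|[[]]].
Qed.

Lemma round_trip (K : {set T}) w : maxclique K -> K != set0 ->
  exists l, [/\ legal_seq e K l, last K l = K & exists2 C, C \in K :: l & w \in C].
Proof.
move=> HK HK0; have HKc := maxsetp HK; have /set0Pn[k Hk] := HK0.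
have [Ha _] := gateP w Hk; set a := gate K w in Ha.
have [p Hg Hl] := exists_geodesic a w.
have Gall := gated_geodesic HK HK0 Hg Hl; rewrite -/a in Gall.
have /= /andP[Ga Gp] := Gall.
have [Lp Ep] := gated_walk HKc Ha Ga (geodesic_path Hg) Gp.
set q := rev (belast a p).
have Hq : path e w q.
  by rewrite -Hl rev_path; apply: sub_path (geodesic_path Hg) => x y; rewrite sym_e.
have Eqa : last w q = a by rewrite -Hl /q; case: (p) => //= y p'; rewrite rev_cons last_rcons.
have Gw : gated K a w by rewrite -Hl; apply: (allP Gall); apply: mem_last.
have Gq : all (gated K a) q by rewrite all_rev; apply/allP => u /mem_belast/(allP Gall).
have [Lq Elq] := gated_walk HKc Ha Gw Hq Gq.
rewrite relocate_self // Hl in Lp Ep; rewrite Eqa relocate_self // in Elq.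
exists (map (relocate K a) p ++ map (relocate K a) q); split.
- by apply/legal_seq_cat; rewrite Ep.
- by rewrite last_cat Ep.
exists (relocate K a w); last exact: setU11.
by rewrite -Ep -cat_cons mem_cat mem_last.
Qed.

Lemma clique_gp_set (K : {set T}) : is_clique e K -> gp_set e K.
Proof.
move=> /is_cliqueP HK; apply: gp_set_between => x y z Hx Hy Hz Hxy Hyz Hxz.
by rewrite /between !dist_edge // HK.
Qed.

Lemma maxclique_mobile (K : {set T}) : maxclique K -> K != set0 -> mobile_gp_set e K.
Proof.
move=> HK HK0; split; first exact/clique_gp_set/maxsetp.
suff [l [Hl _ Hcov]] : exists l, [/\ legal_seq e K l, last K l = K &
    forall w, w \in enum T -> exists2 C, C \in K :: l & w \in C].
  by exists l; split => // x; apply: Hcov; rewrite mem_enum.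
elim: (enum T) => [|w s [l [Hl El Hcov]]]; first by exists [::].
have [lw [Hlw Elw [C HC HwC]]] := round_trip w HK HK0.
exists (lw ++ l); split.
- by apply/legal_seq_cat; rewrite Elw.
- by rewrite last_cat Elw.
move=> x; rewrite inE => /predU1P[->|/Hcov[C' HC' HxC']].
  by exists C => //; move: HC; rewrite !inE mem_cat => /orP[->|->]; rewrite ?orbT.
by exists C' => //; move: HC'; rewrite !inE mem_cat => /orP[->|->]; rewrite ?orbT.
Qed.

(** * Bounding mobile general position sets *)

(* No robot can ever step onto such an [m]: it would then lie on a geodesic
   between two other robots. *)
Definition blocked (C : {set T}) m := [forall r in C, exists x in C, exists y in C,
  [&& x != r, y != r & separates m x y]].

Lemma blockedP (C : {set T}) m : blocked C m ->
  forall r, r \in C -> exists x y, [/\ x \in C, y \in C, x != r, y != r & separates m x y].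
Proof.
move=> /forall_inP Hb r /Hb /exists_inP[x Hx /exists_inP[y Hy /and3P[? ? ?]]].
by exists x, y.
Qed.

Lemma legal_move_avoid (C C' : {set T}) m : m \notin C -> blocked C m ->
  legal_move e C C' -> m \notin C'.
Proof.
move=> HmC Hb [u [v [Hu _ _ EC' Hgp]]].
have notm z : z \in C -> z != m by move=> Hz; apply: contraNneq HmC => <-.
rewrite EC' !inE negb_or (negbTE HmC) andbF andbT eq_sym; apply/eqP => Evm.
have [x [y [Hx Hy Hxu Hyu Hsep]]] := blockedP Hb Hu.
have Hxy : x != y by apply: contraNneq Hsep => ->; apply: connect0.
have inC' z : z \in C -> z != u -> z \in C' by move=> Hz Hzu; rewrite EC' !inE Hzu Hz orbT.
have Hcommon := separates_common_shortest_path (notm x Hx) (notm y Hy) Hsep.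
apply: (Hgp x m y) _ _ _ (notm x Hx) _ Hxy Hcommon.
- exact: inC'.
- by rewrite EC' -Evm setU11.
- exact: inC'.
- by rewrite eq_sym notm.
Qed.

Lemma legal_move_blocked (C C' : {set T}) m : m \notin C -> blocked C m ->
  legal_move e C C' -> blocked C' m.
Proof.
move=> HmC Hb Hmove; have HmC' := legal_move_avoid HmC Hb Hmove.
case: Hmove => u [v [Hu Hv Huv EC' _]].
have notm z : z \in C -> z != m by move=> Hz; apply: contraNneq HmC => <-.
have Hvm : v != m by apply: contraNneq HmC' => <-; rewrite EC' setU11.
pose f z := if z == u then v else z.
have f_connect z : connect (induced e [set~ m]) z (f z).
  rewrite /f; case: eqVneq => [->|_]; last exact: connect0.
  by apply: connect1; rewrite /induced /= !in_setC1 Huv notm.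
apply/forall_inP => r' Hr'; pose r := if r' == v then u else r'.
have Hr : r \in C.
  by rewrite /r; case: eqVneq Hr' => [//|Nr']; rewrite EC' !inE (negbTE Nr') => /andP[].
have [x [y [Hx Hy Hxr Hyr Hsep]]] := blockedP Hb Hr.
have f_in z : z \in C -> z != r -> f z \in C' /\ f z != r'.
  move=> Hz Hzr; rewrite /f EC'; case: (eqVneq z u) => [Ezu|Nzu].
    rewrite setU11; split=> //; apply: contraNneq Hzr => Ev.
    by rewrite /r -Ev eqxx Ezu.
  rewrite !inE Nzu Hz orbT; split=> //; apply: contraNneq Hzr => Ez.
  rewrite /r -Ez; case: (eqVneq z v) => [Ezv|_]; last exact: eqxx.
  by rewrite -Ezv Hz in Hv.
have [Hfx Nfx] := f_in x Hx Hxr; have [Hfy Nfy] := f_in y Hy Hyr.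
apply/exists_inP; exists (f x) => //; apply/exists_inP; exists (f y) => //.
rewrite Nfx Nfy; apply: contra Hsep => Hc.
apply: connect_trans (f_connect x) (connect_trans Hc _).
by rewrite induced_connect_sym.
Qed.

Lemma legal_seq_blocked (C : {set T}) m l : m \notin C -> blocked C m ->
  legal_seq e C l -> forall C2, C2 \in C :: l -> m \notin C2.
Proof.
elim: l C => [|C1 l IH] C HmC Hb /= Hl C2; first by rewrite inE => /eqP->.
case: Hl => Hm Hl; have HmC1 := legal_move_avoid HmC Hb Hm.
have Hb1 := legal_move_blocked HmC Hb Hm.
by rewrite inE => /predU1P[->|HC2] //; apply: IH HC2.
Qed.

Lemma sum_indicator (S : {set T}) (P : pred T) :
  \sum_(r in S) P r = #|[set r in S | P r]|.
Proof.
rewrite -sum1_card [RHS](eq_bigl (fun r => (r \in S) && P r)) => [|r]; last by rewrite !inE.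
by rewrite big_mkcondr; apply: eq_bigr => r _; case: (P r).
Qed.

Definition gate_cost (S K : {set T}) := \sum_(r in S) dist r (gate K r).

Section GateShift.
Variables (S K K' : {set T}) (a : T).
Hypotheses (HK : maxclique K) (HK' : maxclique K') (HaK : a \in K) (HaK' : a \in K').

(* Passing from [K] to [K'], robots in [A] may get one step farther from
   their gate and robots in [B] get one step closer. *)
Let A := [set r in S | gate K r != a].
Let B := [set r in S | (gate K r == a) && (gate K' r != a)].

Lemma gate_cost_shift : gate_cost S K' + #|B| <= gate_cost S K + #|A|.
Proof.
rewrite /A /B -!sum_indicator /gate_cost -!big_split /=; apply: leq_sum => r _.
have [_ Hmin'] := gateP r HaK'.
case: (eqVneq (gate K r) a) => [Er|Ner] /=.
  case: (eqVneq (gate K' r) a) => [Er'|Ner'] /=; first by rewrite Er Er'.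
  by rewrite Er (@gate_dist_succ K' r a) 1?eq_sym // addn1 addn0.
by rewrite addn0 addn1 -(@gate_dist_succ K r a) 1?eq_sym // Hmin'.
Qed.

Variables (x1 y1 r0 : T).
Hypotheses (Hx1 : x1 \in S) (Hy1 : y1 \in S) (Hxy1 : x1 != y1) (Hx1a : x1 != a).
Hypotheses (Hgx1 : gate K x1 = a) (Hgy1 : gate K y1 = a) (Hgx1' : gate K' x1 != a).
Hypotheses (Hr0 : r0 \in S) (Hr0a : a \in S -> r0 = a).
Hypothesis Hcon :
  {in S &, forall u v, u != r0 -> v != r0 -> u != a -> v != a -> ~~ separates a u v}.

Lemma gate_shift_gain : 2 < #|S| -> #|A| < #|B|.
Proof.
move=> HS; have Hx1B : x1 \in B by rewrite inE Hx1 Hgx1 eqxx.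
have notin_a u : u \in S -> u != r0 -> u != a.
  by move=> Hu Hur0; apply: contraNneq Hur0 => Eua; rewrite Hr0a -Eua ?eqxx.
case: (eqVneq x1 r0) => [Ex1|Nx1].
  have HaS : a \notin S by apply: contraNN Hx1a => /Hr0a <-; rewrite Ex1 eqxx.
  suff -> : A = set0 by rewrite cards0 card_gt0; apply/set0Pn; exists x1.
  apply/setP => u; rewrite !inE; apply/negP => /andP[Hu Hua].
  have Hur0 : u != r0 by apply: contraNneq Hua => ->; rewrite -Ex1 Hgx1.
  have Hy1r0 : y1 != r0 by rewrite -Ex1 eq_sym.
  have := Hcon Hy1 Hu Hy1r0 Hur0 (notin_a y1 Hy1 Hy1r0) (notin_a u Hu Hur0).
  by rewrite (gate_separates HK HaK Hua Hgy1 (notin_a y1 Hy1 Hy1r0)).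
have HB u : u \in S -> u != r0 -> u \in B.
  move=> Hu Hur0; have Hc := Hcon Hx1 Hu Nx1 Hur0 Hx1a (notin_a u Hu Hur0).
  rewrite inE Hu /=; case: (eqVneq (gate K u) a) => [Eu|Nu] /=.
    apply/eqP => Eu'; move: Hc; rewrite separatesC.
    by rewrite (gate_separates HK' HaK' Hgx1' Eu' (notin_a u Hu Hur0)).
  by move: Hc; rewrite (gate_separates HK HaK Nu Hgx1 Hx1a).
have LA : #|A| <= 1.
  rewrite -(cards1 r0); apply/subset_leq_card/subsetP => u.
  rewrite !inE => /andP[Hu Hua]; apply/negPn/negP => Hur0.
  by move: (HB u Hu Hur0); rewrite inE Hu (negbTE Hua).
have LB : #|S :\ r0| <= #|B|.
  by apply/subset_leq_card/subsetP => u /setD1P[Hur0 Hu]; apply: HB.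
move: HS; rewrite (cardsD1 r0 S) Hr0 add1n ltnS => HS.
exact: leq_ltn_trans LA (leq_trans HS LB).
Qed.

End GateShift.

Lemma exists_cut_robot (S : {set T}) a : gp_set e S -> (a \notin S -> ~~ blocked S a) ->
  exists r0, [/\ r0 \in S, a \in S -> r0 = a &
    {in S &, forall u v, u != r0 -> v != r0 -> u != a -> v != a -> ~~ separates a u v}].
Proof.
move=> Sgp Hnb; case: (boolP (a \in S)) => HaS.
  exists a; split=> // u v Hu Hv _ _ Hua Hva; apply/negP => Hsep.
  have Huv : u != v by apply: contraNneq Hsep => ->; apply: connect0.
  apply: (Sgp u a v Hu HaS Hv Hua _ Huv); first by rewrite eq_sym.
  exact: separates_common_shortest_path.
have /forall_inPn[r0 Hr0 /exists_inPn Hn] := Hnb HaS.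
exists r0; split=> // u v Hu Hv Hur Hvr _ _.
by have /exists_inPn/(_ v Hv) := Hn u Hu; rewrite Hur Hvr.
Qed.

Lemma shared_gate (S K : {set T}) k : k \in K -> #|K| < #|S| ->
  exists x y, [/\ x \in S, y \in S, x != y & gate K x = gate K y].
Proof.
move=> Hk HKS.
have /dinjectivePn[x Hx [y /andP[Hyx Hy] Hg]] : ~~ dinjectiveb (gate K) S.
  apply: contraTN HKS => /dinjectiveP/card_in_imset <-; rewrite -leqNgt.
  by apply/subset_leq_card/subsetP => _ /imsetP[u _ ->]; case: (gateP u Hk).
by exists x, y; rewrite eq_sym.
Qed.

Lemma exists_maxclique_gate_neq a x : a != x ->
  exists K, [/\ maxclique K, a \in K & gate K x != a].
Proof.
move=> Hax; have [a' [Haa' Da']] := exists_closer_neighbor Hax.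
have [K HK /subsetP sK] := maxset_exists (is_clique2 Haa').
have HaK : a \in K by apply: sK; rewrite !inE eqxx.
have Ha'K : a' \in K by apply: sK; rewrite !inE eqxx orbT.
exists K; split=> //; apply/eqP => Ega.
have [_ Hmin] := gateP x HaK; have := Hmin a' Ha'K.
by rewrite Ega (distC x a) (distC x a') Da' ltnn.
Qed.

Lemma maxclique_neq0 (K : {set T}) (x : T) : maxclique K -> K != set0.
Proof.
move=> HK; apply/negP => /eqP K0.
have := maxsetsup HK (is_clique1 x); rewrite K0 sub0set => /(_ isT)/setP/(_ x).
by rewrite !inE eqxx.
Qed.

Lemma clique_le_clique_number (K : {set T}) : is_clique e K -> #|K| <= clique_number e.
Proof. exact: leq_bigmax_cond. Qed.

Lemma unblocked_card_le_clique_number (S : {set T}) : gp_set e S -> 2 < #|S| ->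
  (forall m, m \notin S -> ~~ blocked S m) -> #|S| <= clique_number e.
Proof.
move=> Sgp HS Hnb.
have /set0Pn[x0 _] : S != set0 by rewrite -card_gt0 (leq_trans _ HS).
have [K0 HK0 _] := maxset_exists (is_clique1 x0).
have [K HK Hmin] := arg_minnP (gate_cost S) HK0.
have /set0Pn[k Hk] := maxclique_neq0 x0 HK.
apply: leq_trans (clique_le_clique_number (maxsetp HK)); rewrite leqNgt; apply/negP => HKS.
have [x [y [Hx Hy Hxy Hg]]] := shared_gate Hk HKS.
have [Ha _] := gateP x Hk; set a := gate K x in Hg Ha.
have [x1 [y1 [Hx1 Hy1 Hxy1 [Hgx1 Hgy1 Hx1a]]]] : exists x1 y1,
    [/\ x1 \in S, y1 \in S, x1 != y1 & [/\ gate K x1 = a, gate K y1 = a & x1 != a]].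
  case: (eqVneq x a) => [Exa|Nxa]; last by exists x, y.
  exists y, x; split=> //; first by rewrite eq_sym.
  by split=> //; rewrite -Exa eq_sym.
have Hax1 : a != x1 by rewrite eq_sym.
have [K' [HK' HaK' Hgx1']] := exists_maxclique_gate_neq Hax1.
have [r0 [Hr0 Hr0a Hcon]] := exists_cut_robot Sgp (Hnb a).
have Hgain := gate_shift_gain HK HK' Ha HaK' Hx1 Hy1 Hxy1 Hx1a Hgx1 Hgy1 Hgx1' Hr0 Hr0a Hcon HS.
have := leq_trans (leq_add (Hmin K' HK') Hgain) (gate_cost_shift S HK HK' Ha HaK').
by rewrite addnS ltnn.
Qed.

Lemma small_card_le_clique_number (S : {set T}) : #|S| <= 2 -> #|S| <= clique_number e.
Proof.
move=> HS; case: (set_0Vmem S) => [->|[x Hx]]; first by rewrite cards0.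
case: (leqP #|S| 1) => [HS1|HS1].
  by apply: leq_trans HS1 _; rewrite -(cards1 x) clique_le_clique_number // is_clique1.
have /set0Pn[y /setD1P[Hyx _]] : S :\ x != set0.
  by rewrite -card_gt0; move: HS1; rewrite (cardsD1 x S) Hx add1n ltnS.
have /connectP[[|z p] /= Hp Hl] := conn_e x y; first by rewrite Hl eqxx in Hyx.
have /andP[Hxz _] := Hp; apply: leq_trans HS _.
by have := clique_le_clique_number (is_clique2 Hxz); rewrite cards2 edge_neq.
Qed.

Lemma mobile_card_le_clique_number (S : {set T}) :
  mobile_gp_set e S -> #|S| <= clique_number e.
Proof.
case=> Sgp [l [Hl Hcov]].
case: (leqP #|S| 2) => [|HS]; first exact: small_card_le_clique_number.
apply: unblocked_card_le_clique_number Sgp HS _ => m HmS; apply/negP => Hb.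
have [C HC HmC] := Hcov m.
by move: (legal_seq_blocked HmS Hb Hl HC); rewrite HmC.
Qed.

Lemma clique_number_le_mob : clique_number e <= mob e.
Proof.
have Hc0 : is_clique e set0 by apply/is_cliqueP => x y; rewrite inE.
have [K HK Hmax] := arg_maxnP (fun K : {set T} => #|K|) Hc0.
apply: (@leq_trans #|K|); first by apply/bigmax_leqP => K' /Hmax.
have [->|HK0] := eqVneq K set0; first by rewrite cards0.
have HKm : maxclique K.
  apply/maxsetP; split=> // B HB sKB; apply/eqP; rewrite eq_sym eqEcard sKB.
  exact: Hmax.
by apply: leq_bigmax_cond; apply/boolp.asboolP; apply: maxclique_mobile.
Qed.

End BlockGraph.
End Graph.

Theorem theorem2p2 (T : finType) (e : rel T) :
  block_graph e -> mob e = clique_number e.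
Proof.
case=> [[sym_e irr_e] [conn_e hblock]].
apply/eqP; rewrite eqn_leq clique_number_le_mob // andbT.
apply/bigmax_leqP => S /boolp.asboolP.
exact: mobile_card_le_clique_number.
Qed.
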